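(* For $n\in\mathbb{Z}^+$ we have $$\begin{aligned}&t(1,3,16;n)=2N(1,3,16;2n+5)=t(2,2,3;(n-1)/4)&&\text{for } n\equiv 1\pmod 4,\\ &t(1,3,48;n)=2N(1,3,48;2n+13)=t(1,6,6;n/4)&&\text{for } n\equiv 0\pmod 4,\\ &t(1,3,4;n)=\tfrac 43N(1,3,4;2n+2)&&\text{for } n\equiv 3,5\pmod 8,\\ &t(1,3,12;n)=\tfrac 43N(1,3,12;2n+4)&&\text{for } n\equiv 0,2\pmod 8,\\ &t(1,3,36;n)=\tfrac 43N(1,3,36;2n+10)&&\text{for } n\equiv 1,7\pmod 8,\\ &t(3,4,9;n)=\tfrac 43N(3,4,9;2n+4)&&\text{for } n\equiv 2,4\pmod 8.\end{aligned}$$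
   Context: $\mathbb{Z}^+$ is the set of positive integers. For $a,b,c\in\mathbb{Z}^+$ and nonnegative integer $n$, $N(a,b,c;n)$ denotes the number of triples $(x,y,z)\in\mathbb{Z}^3$ with $n=ax^2+by^2+cz^2$, and $t(a,b,c;n)$ denotes the number of triples $(x,y,z)\in\mathbb{Z}^3$ with $n=a\frac{x(x+1)}2+b\frac{y(y+1)}2+c\frac{z(z+1)}2$. *)

From Stdlib Require Import ZArith List Lia.
Import ListNotations.
Open Scope Z_scope.

Definition Zrange (lo hi : Z) : list Z :=
  map (fun k => lo + Z.of_nat k) (seq 0 (Z.to_nat (hi - lo + 1))).

Definition count3 (box : list Z) (P : Z -> Z -> Z -> bool) : Z :=
  Z.of_nat (length (filter (fun t => match t with (x,(y,z)) => P x y z end)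
     (list_prod box (list_prod box box)))).

(* N(a,b,c;n) = #{(x,y,z) in Z^3 : n = a x^2 + b y^2 + c z^2}.
   For a,b,c >= 1 and n >= 0 every solution satisfies |x|,|y|,|z| <= n,
   so counting over the box [-n,n]^3 counts all solutions. *)
Definition Nrep (a b c n : Z) : Z :=
  count3 (Zrange (- n) n)
    (fun x y z => Z.eqb n (a*x*x + b*y*y + c*z*z)).

(* t(a,b,c;n) = #{(x,y,z) in Z^3 : n = a x(x+1)/2 + b y(y+1)/2 + c z(z+1)/2}.
   For a,b,c >= 1 and n >= 0 every solution has x,y,z in [-n-1, n]. *)
Definition trep (a b c n : Z) : Z :=
  count3 (Zrange (- n - 1) n)
    (fun x y z => Z.eqb (2*n) (a*(x*(x+1)) + b*(y*(y+1)) + c*(z*(z+1)))).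

(* Every identity is a composition of explicit bijections between solution
   sets of diagonal ternary forms.  The substitution x -> 2x+1 turns
   t(a,b,c;n) into the number of odd solutions of ax^2+by^2+cz^2 = 8n+a+b+c.
   By the Eisenstein identity (x+3y)^2 + 3(x-y)^2 = 4(x^2+3y^2), the odd
   solutions of d x^2 + 3d y^2 = 4m are twice as many as the solutions of
   d x^2 + 3d y^2 = m with x+y odd; (y+z)^2 + (y-z)^2 = 2(y^2+z^2) similarly
   relates the forms 2b(y^2+z^2) and 4b(y^2+z^2), and doubling a variable
   trades a coefficient c for 4c.  Congruences modulo 8 pin down the parities
   of all solutions, which turns each restricted count back into a full count
   N(a,b,c;m). *)

From Stdlib Require Import ZArith List Lia Bool Btauto.
Open Scope Z_scope.

(** * Counting solutions *)

Lemma in_Zrange lo hi k : In k (Zrange lo hi) <-> lo <= k <= hi.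
Proof.
  unfold Zrange. rewrite in_map_iff. split.
  - intros [j [<- Hj]]. apply in_seq in Hj. lia.
  - intros H. exists (Z.to_nat (k - lo)). split; [lia|]. apply in_seq. lia.
Qed.

Lemma NoDup_Zrange lo hi : NoDup (Zrange lo hi).
Proof.
  unfold Zrange. apply NoDup_map_NoDup_ForallPairs; [|apply seq_NoDup].
  intros a b _ _ E. lia.
Qed.

Lemma NoDup_list_prod {A B} (l1 : list A) (l2 : list B) :
  NoDup l1 -> NoDup l2 -> NoDup (list_prod l1 l2).
Proof.
  induction 1 as [|a l1 Ha Hl1 IH]; intros H2; simpl; [constructor|].
  apply NoDup_app; auto.
  - apply NoDup_map_NoDup_ForallPairs; auto.
    intros x y _ _ E. now injection E.
  - intros [x y] H1 H3. apply in_map_iff in H1. destruct H1 as [b [E _]].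
    injection E as <- <-. apply in_prod_iff in H3. tauto.
Qed.

Lemma length_filter_le {A B} (l1 : list A) (l2 : list B) (P : A -> bool) (Q : B -> bool)
    (f : A -> B) (g : B -> A) :
  NoDup l1 ->
  (forall a, In a l1 -> P a = true -> In (f a) l2 /\ Q (f a) = true) ->
  (forall a, In a l1 -> P a = true -> g (f a) = a) ->
  (length (filter P l1) <= length (filter Q l2))%nat.
Proof.
  intros N1 Hf Hgf. rewrite <- (length_map f). apply NoDup_incl_length.
  - apply NoDup_map_NoDup_ForallPairs; [|now apply NoDup_filter].
    intros a1 a2 H1 H2 E. apply filter_In in H1, H2.
    rewrite <- (Hgf a1), <- (Hgf a2), E by tauto. reflexivity.
  - intros b Hb. apply in_map_iff in Hb. destruct Hb as [a [<- Ha]].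
    apply filter_In in Ha. apply filter_In. apply Hf; tauto.
Qed.

Lemma length_filter_bij {A B} (l1 : list A) (l2 : list B) (P : A -> bool) (Q : B -> bool)
    (f : A -> B) (g : B -> A) :
  NoDup l1 -> NoDup l2 ->
  (forall a, In a l1 -> P a = true -> In (f a) l2 /\ Q (f a) = true) ->
  (forall b, In b l2 -> Q b = true -> In (g b) l1 /\ P (g b) = true) ->
  (forall a, In a l1 -> P a = true -> g (f a) = a) ->
  (forall b, In b l2 -> Q b = true -> f (g b) = b) ->
  length (filter P l1) = length (filter Q l2).
Proof.
  intros. apply Nat.le_antisymm; eapply length_filter_le; eauto.
Qed.

Lemma count3_bij (box1 box2 : list Z) (P1 P2 : Z -> Z -> Z -> bool)
    (S1 S2 : Z * (Z * Z) -> Prop) (f g : Z * (Z * Z) -> Z * (Z * Z)) :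
  NoDup box1 -> NoDup box2 ->
  (forall x y z, P1 x y z = true <-> S1 (x, (y, z))) ->
  (forall x y z, P2 x y z = true <-> S2 (x, (y, z))) ->
  (forall x y z, S1 (x, (y, z)) -> In x box1 /\ In y box1 /\ In z box1) ->
  (forall x y z, S2 (x, (y, z)) -> In x box2 /\ In y box2 /\ In z box2) ->
  (forall t, S1 t -> S2 (f t)) -> (forall s, S2 s -> S1 (g s)) ->
  (forall t, S1 t -> g (f t) = t) -> (forall s, S2 s -> f (g s) = s) ->
  count3 box1 P1 = count3 box2 P2.
Proof.
  intros N1 N2 HP1 HP2 B1 B2 Hf Hg Hgf Hfg. unfold count3. f_equal.
  apply length_filter_bij with f g; try (repeat apply NoDup_list_prod; assumption).
  - intros [x [y z]] _ Ht. apply HP1, Hf in Ht.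
    destruct (f (x, (y, z))) as [p [q r]].
    rewrite !in_prod_iff, HP2. specialize (B2 _ _ _ Ht). tauto.
  - intros [p [q r]] _ Hs. apply HP2, Hg in Hs.
    destruct (g (p, (q, r))) as [x [y z]].
    rewrite !in_prod_iff, HP1. specialize (B1 _ _ _ Hs). tauto.
  - intros [x [y z]] _ Ht. apply Hgf, HP1, Ht.
  - intros [p [q r]] _ Hs. apply Hfg, HP2, Hs.
Qed.

Lemma count3_ext box (P Q : Z -> Z -> Z -> bool) :
  (forall x y z, P x y z = Q x y z) -> count3 box P = count3 box Q.
Proof.
  intros H. unfold count3. f_equal. f_equal. apply filter_ext. intros [x [y z]]. apply H.
Qed.

Lemma count3_split box (P S : Z -> Z -> Z -> bool) :
  count3 box P = count3 box (fun x y z => P x y z && S x y z)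
               + count3 box (fun x y z => P x y z && negb (S x y z)).
Proof.
  unfold count3. rewrite <- Nat2Z.inj_add. f_equal.
  induction (list_prod box (list_prod box box)) as [|[x [y z]] l IH]; simpl; [reflexivity|].
  destruct (P x y z), (S x y z); simpl; rewrite IH; auto.
Qed.

(* N(a,b,c;m) restricted to the solutions satisfying P; as for Nrep, the box
   [-m,m]^3 contains every solution as soon as a, b, c >= 1. *)
Definition NrepP (a b c m : Z) (P : Z -> Z -> Z -> bool) : Z :=
  count3 (Zrange (- m) m) (fun x y z => (m =? a*x*x + b*y*y + c*z*z) && P x y z).

Definition is_sol (a b c m : Z) (P : Z -> Z -> Z -> bool) (t : Z * (Z * Z)) : Prop :=
  let '(x, (y, z)) := t in m = a*x*x + b*y*y + c*z*z /\ P x y z = true.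

Lemma is_sol_box a b c m P x y z : 1 <= a -> 1 <= b -> 1 <= c ->
  is_sol a b c m P (x, (y, z)) ->
  In x (Zrange (- m) m) /\ In y (Zrange (- m) m) /\ In z (Zrange (- m) m).
Proof.
  intros ha hb hc [E _]. rewrite !in_Zrange.
  assert (0 <= x * x) by nia. assert (0 <= y * y) by nia. assert (0 <= z * z) by nia.
  repeat split; nia.
Qed.

Lemma NrepP_bij a b c m P a' b' c' m' Q (f g : Z * (Z * Z) -> Z * (Z * Z)) :
  1 <= a -> 1 <= b -> 1 <= c -> 1 <= a' -> 1 <= b' -> 1 <= c' ->
  (forall t, is_sol a b c m P t -> is_sol a' b' c' m' Q (f t)) ->
  (forall s, is_sol a' b' c' m' Q s -> is_sol a b c m P (g s)) ->
  (forall t, is_sol a b c m P t -> g (f t) = t) ->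
  (forall s, is_sol a' b' c' m' Q s -> f (g s) = s) ->
  NrepP a b c m P = NrepP a' b' c' m' Q.
Proof.
  intros. apply count3_bij with (is_sol a b c m P) (is_sol a' b' c' m' Q) f g;
    try apply NoDup_Zrange; auto.
  - intros x y z. cbn. now rewrite andb_true_iff, Z.eqb_eq.
  - intros x y z. cbn. now rewrite andb_true_iff, Z.eqb_eq.
  - intros x y z. now apply is_sol_box.
  - intros x y z. now apply is_sol_box.
Qed.

Lemma NrepP_ext a b c m P Q :
  (forall x y z, m = a*x*x + b*y*y + c*z*z -> P x y z = Q x y z) ->
  NrepP a b c m P = NrepP a b c m Q.
Proof.
  intros H. apply count3_ext. intros x y z.
  destruct (Z.eqb_spec m (a*x*x + b*y*y + c*z*z)) as [E|]; simpl; auto.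
Qed.

Lemma NrepP_split a b c m P S :
  NrepP a b c m P = NrepP a b c m (fun x y z => P x y z && S x y z)
                  + NrepP a b c m (fun x y z => P x y z && negb (S x y z)).
Proof.
  unfold NrepP. rewrite (count3_split _ _ S).
  f_equal; apply count3_ext; intros; symmetry; apply andb_assoc.
Qed.

Lemma Nrep_NrepP a b c m : Nrep a b c m = NrepP a b c m (fun _ _ _ => true).
Proof. apply count3_ext. intros. now rewrite andb_true_r. Qed.

Definition odd3 (x y z : Z) : bool := Z.odd x && Z.odd y && Z.odd z.

Lemma trep_NrepP a b c n : 1 <= a -> 1 <= b -> 1 <= c -> 0 <= n ->
  trep a b c n = NrepP a b c (8*n + a + b + c) odd3.
Proof.
  intros ha hb hc hn.
  assert (Hpos : forall u, 0 <= u * (u + 1)) by (intros u; destruct (Z_le_gt_dec 0 u); nia).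
  assert (Hodd : forall p, Z.odd p = true -> p = 2 * ((p - 1) / 2) + 1).
  { intros p Hp. rewrite Zodd_mod, Z.eqb_eq in Hp. Z.div_mod_to_equations. lia. }
  assert (Hhalf : forall u, (2 * u + 1 - 1) / 2 = u).
  { intros u. replace (2 * u + 1 - 1) with (u * 2) by ring. apply Z.div_mul. lia. }
  unfold trep.
  apply count3_bij with
    (fun '(x, (y, z)) => 2*n = a*(x*(x+1)) + b*(y*(y+1)) + c*(z*(z+1)))
    (is_sol a b c (8*n + a + b + c) odd3)
    (fun '(x, (y, z)) => (2*x + 1, (2*y + 1, 2*z + 1)))
    (fun '(p, (q, r)) => ((p - 1) / 2, ((q - 1) / 2, (r - 1) / 2)));
    try apply NoDup_Zrange.
  - intros x y z. apply Z.eqb_eq.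
  - intros x y z. cbn. now rewrite andb_true_iff, Z.eqb_eq.
  - intros x y z E. rewrite !in_Zrange.
    pose proof (Hpos x). pose proof (Hpos y). pose proof (Hpos z).
    repeat split; nia.
  - intros x y z. apply is_sol_box; lia.
  - intros [x [y z]] E. split; [lia|]. unfold odd3. now rewrite !Z.odd_odd.
  - intros [p [q r]] [E H]. unfold odd3 in H. rewrite !andb_true_iff in H.
    destruct H as [[Hp Hq] Hr].
    rewrite (Hodd p Hp), (Hodd q Hq), (Hodd r Hr) in E. lia.
  - intros [x [y z]] _. now rewrite !Hhalf.
  - intros [p [q r]] [_ H]. unfold odd3 in H. rewrite !andb_true_iff in H.
    destruct H as [[Hp Hq] Hr]. now rewrite <- (Hodd p Hp), <- (Hodd q Hq), <- (Hodd r Hr).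
Qed.

(** * Changes of variables *)

Ltac unfold_sol := unfold is_sol in *; cbv beta iota in *.

Ltac bool_hyps := repeat match goal with
  | H : _ /\ _ |- _ => destruct H
  | H : (_ && _) = true |- _ => apply andb_true_iff in H
  | H : negb _ = true |- _ => apply negb_true_iff in H
  | H : Z.odd _ = true |- _ => rewrite Zodd_mod, Z.eqb_eq in H
  | H : Z.odd _ = false |- _ => rewrite Zodd_mod, Z.eqb_neq in H
  | H : Z.even _ = true |- _ => rewrite Zeven_mod, Z.eqb_eq in H
  | H : (_ =? _) = true |- _ => apply Z.eqb_eq in H
  | H : (_ =? _) = false |- _ => apply Z.eqb_neq in H
  end.

Ltac bool_goal := repeat match goal with
  | |- _ /\ _ => split
  | |- (_ && _) = true => apply andb_true_iff
  | |- negb _ = true => apply negb_true_iff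
  | |- Z.odd _ = true => rewrite Zodd_mod, Z.eqb_eq
  | |- Z.odd _ = false => rewrite Zodd_mod, Z.eqb_neq
  | |- Z.even _ = true => rewrite Zeven_mod, Z.eqb_eq
  | |- (_ =? _) = true => apply Z.eqb_eq
  | |- (_ =? _) = false => apply Z.eqb_neq
  end.

Ltac solve_sol := bool_hyps; bool_goal; try assumption; Z.div_mod_to_equations; lia.

Ltac name_quotient e k X :=
  let H := fresh "Hq" in
  assert (H : e = k * (e / k)) by (Z.div_mod_to_equations; lia);
  set (X := e / k) in *; clearbody X.

Lemma NrepP_swap12 a b c m P : 1 <= a -> 1 <= b -> 1 <= c ->
  NrepP a b c m P = NrepP b a c m (fun x y z => P y x z).
Proof.
  intros ha hb hc.
  apply NrepP_bij with (fun '(x, (y, z)) => (y, (x, z))) (fun '(x, (y, z)) => (y, (x, z)));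
    auto; intros [x [y z]] [E H]; try split; auto; lia.
Qed.

Lemma NrepP_swap13 a b c m P : 1 <= a -> 1 <= b -> 1 <= c ->
  NrepP a b c m P = NrepP c b a m (fun x y z => P z y x).
Proof.
  intros ha hb hc.
  apply NrepP_bij with (fun '(x, (y, z)) => (z, (y, x))) (fun '(x, (y, z)) => (z, (y, x)));
    auto; intros [x [y z]] [E H]; try split; auto; lia.
Qed.

Lemma NrepP_swap23 a b c m P : 1 <= a -> 1 <= b -> 1 <= c ->
  NrepP a b c m P = NrepP a c b m (fun x y z => P x z y).
Proof.
  intros ha hb hc.
  apply NrepP_bij with (fun '(x, (y, z)) => (x, (z, y))) (fun '(x, (y, z)) => (x, (z, y)));
    auto; intros [x [y z]] [E H]; try split; auto; lia.
Qed.

Lemma NrepP_rotate a b c m P : 1 <= a -> 1 <= b -> 1 <= c ->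
  NrepP a b c m P = NrepP c a b m (fun x y z => P y z x).
Proof.
  intros ha hb hc.
  apply NrepP_bij with (fun '(x, (y, z)) => (z, (x, y))) (fun '(x, (y, z)) => (y, (z, x)));
    auto; intros [x [y z]] [E H]; try split; auto; lia.
Qed.

Lemma NrepP_double3 a b c m P : 1 <= a -> 1 <= b -> 1 <= c ->
  NrepP a b (4*c) m P = NrepP a b c m (fun x y z => Z.even z && P x y (z/2)).
Proof.
  intros ha hb hc.
  apply NrepP_bij with (fun '(x, (y, z)) => (x, (y, 2*z))) (fun '(x, (y, z)) => (x, (y, z/2)));
    try lia; intros [x [y z]] [E H]; unfold_sol.
  - replace (2*z/2) with z by (Z.div_mod_to_equations; lia).
    rewrite H, Z.even_mul. split; [lia | reflexivity].
  - bool_hyps. name_quotient z 2 w. subst z. split; [lia | assumption].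
  - f_equal. f_equal. Z.div_mod_to_equations; lia.
  - bool_hyps. f_equal. f_equal. Z.div_mod_to_equations; lia.
Qed.

Lemma NrepP_double2 a b c m P : 1 <= a -> 1 <= b -> 1 <= c ->
  NrepP a (4*b) c m P = NrepP a b c m (fun x y z => Z.even y && P x (y/2) z).
Proof.
  intros ha hb hc.
  rewrite NrepP_swap23, NrepP_double3, NrepP_swap23 by lia. reflexivity.
Qed.

Lemma NrepP_halve a b c m : 1 <= a -> 1 <= b -> 1 <= c ->
  NrepP a b c (4*m) (fun x y z => Z.even x && Z.even y && Z.even z) =
  NrepP a b c m (fun _ _ _ => true).
Proof.
  intros ha hb hc.
  apply NrepP_bij with (fun '(x, (y, z)) => (x/2, (y/2, z/2)))
    (fun '(x, (y, z)) => (2*x, (2*y, 2*z))); try lia; intros [x [y z]] [E H]; unfold_sol.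
  - bool_hyps. name_quotient x 2 u. name_quotient y 2 v. name_quotient z 2 w. subst x y z.
    split; [lia | reflexivity].
  - rewrite !Z.even_mul. split; [lia | reflexivity].
  - bool_hyps. f_equal; [|f_equal]; Z.div_mod_to_equations; lia.
  - f_equal; [|f_equal]; Z.div_mod_to_equations; lia.
Qed.

Lemma NrepP_exchange a b m P : 1 <= a -> 1 <= b ->
  NrepP a b (4*a) m (fun x y z => Z.even x && P x y z) =
  NrepP a b (4*a) m (fun x y z => Z.even x && P (2*z) y (x/2)).
Proof.
  intros ha hb.
  assert (Hhalf : forall z, 2*z/2 = z) by (intros; Z.div_mod_to_equations; lia).
  apply NrepP_bij with (fun '(x, (y, z)) => (2*z, (y, x/2))) (fun '(x, (y, z)) => (2*z, (y, x/2)));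
    try lia; intros [x [y z]] [E H]; unfold_sol; apply andb_true_iff in H as [Hx H];
    bool_hyps; name_quotient x 2 u; subst x; rewrite ?Hhalf, ?Z.even_mul; auto;
    split; auto; lia.
Qed.

(* The solutions (p,q,z) of the left-hand side with p = q (mod 4) come from
   (x,y,z) = ((p+3q)/4, (p-q)/4, z), those with p <> q (mod 4) from
   ((p-3q)/4, -(p+q)/4, z), because (x+3y)^2 + 3(x-y)^2 = (x-3y)^2 + 3(x+y)^2
   = 4(x^2+3y^2). *)
Lemma NrepP_eisenstein d e m R : 1 <= d -> 1 <= e ->
  NrepP d (3*d) (4*e) (4*m) (fun x y z => Z.odd x && Z.odd y && R z) =
  2 * NrepP d (3*d) e m (fun x y z => Z.odd (x + y) && R z).
Proof.
  intros hd he.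
  rewrite (NrepP_split _ _ _ _ _ (fun x y z => (x - y) mod 4 =? 0)).
  rewrite <- Z.add_diag. symmetry. f_equal.
  - apply NrepP_bij with (fun '(x, (y, z)) => (x + 3*y, (x - y, z)))
      (fun '(p, (q, r)) => ((p + 3*q)/4, ((p - q)/4, r))); try lia;
      intros [x [y z]] [E H]; unfold_sol.
    + solve_sol.
    + bool_hyps. name_quotient (x + 3*y) 4 u. name_quotient (x - y) 4 v.
      assert (x = u + 3*v) by lia. assert (y = u - v) by lia. subst x y. solve_sol.
    + f_equal; [|f_equal]; Z.div_mod_to_equations; lia.
    + bool_hyps. f_equal; [|f_equal]; Z.div_mod_to_equations; lia.
  - apply NrepP_bij with (fun '(x, (y, z)) => (x - 3*y, (- x - y, z)))
      (fun '(p, (q, r)) => ((p - 3*q)/4, (- (p + q)/4, r))); try lia;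
      intros [x [y z]] [E H]; unfold_sol.
    + solve_sol.
    + bool_hyps. name_quotient (x - 3*y) 4 u. name_quotient (- (x + y)) 4 v.
      assert (x = u - 3*v) by lia. assert (y = - u - v) by lia. subst x y. solve_sol.
    + f_equal; [|f_equal]; Z.div_mod_to_equations; lia.
    + bool_hyps. f_equal; [|f_equal]; Z.div_mod_to_equations; lia.
Qed.

Lemma NrepP_eisenstein_even d e m : 1 <= d -> 1 <= e ->
  NrepP d (3*d) e (4*m) (fun x y z => Z.odd x && Z.odd y && Z.even z) =
  2 * NrepP d (3*d) e m (fun x y z => Z.odd (x + y)).
Proof.
  intros hd he.
  transitivity (NrepP d (3*d) (4*e) (4*m) (fun x y z => Z.odd x && Z.odd y && true)).
  { rewrite NrepP_double3 by lia. apply NrepP_ext. intros x y z _. btauto. }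
  rewrite NrepP_eisenstein by lia. f_equal.
  apply NrepP_ext. intros x y z _. apply andb_true_r.
Qed.

Lemma odd_form a b c x y z :
  Z.odd (a*x*x + b*y*y + c*z*z) =
  xorb (xorb (Z.odd a && Z.odd x) (Z.odd b && Z.odd y)) (Z.odd c && Z.odd z).
Proof.
  rewrite !Z.odd_add, !Z.odd_mul.
  now destruct (Z.odd a), (Z.odd b), (Z.odd c), (Z.odd x), (Z.odd y), (Z.odd z).
Qed.

Lemma NrepP_even_third d e m : Z.odd d = true -> 1 <= d -> 1 <= e ->
  NrepP d (3*d) e (4*m) (fun x y z => Z.even z) =
  2 * NrepP d (3*d) e m (fun x y z => Z.odd (x + y)) + NrepP d (3*d) e m (fun _ _ _ => true).
Proof.
  intros Hd hd he.
  assert (Hpar : forall x y z, 4*m = d*x*x + 3*d*y*y + e*z*z ->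
                   Z.even z = true -> Z.odd x = Z.odd y).
  { intros x y z E Hz. apply (f_equal Z.odd) in E.
    rewrite odd_form, !Z.odd_mul, Hd in E. rewrite <- Z.negb_odd in Hz.
    destruct (Z.odd x), (Z.odd y), (Z.odd z), (Z.odd e); simpl in *; congruence. }
  rewrite (NrepP_split _ _ _ _ _ (fun x y z => Z.odd x)). f_equal.
  - rewrite <- NrepP_eisenstein_even by lia. apply NrepP_ext. intros x y z E.
    destruct (Z.even z) eqn:Hz; [|btauto].
    rewrite <- (Hpar x y z E Hz). btauto.
  - rewrite <- NrepP_halve by lia. apply NrepP_ext. intros x y z E.
    destruct (Z.even z) eqn:Hz; [|btauto].
    rewrite <- !Z.negb_odd, <- (Hpar x y z E Hz). btauto.
Qed.

Lemma NrepP_halfsum a b m R : 1 <= a -> 1 <= b ->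
  NrepP a (2*b) (2*b) m (fun x y z => R x && Z.odd y && Z.odd z) =
  NrepP a (4*b) (4*b) m (fun x y z => R x && Z.odd (y + z)).
Proof.
  intros ha hb.
  apply NrepP_bij with (fun '(x, (y, z)) => (x, ((y + z)/2, (y - z)/2)))
    (fun '(x, (y, z)) => (x, (y + z, y - z))); try lia;
    intros [x [y z]] [E H]; unfold_sol.
  - bool_hyps. name_quotient (y + z) 2 u. name_quotient (y - z) 2 v.
    assert (y = u + v) by lia. assert (z = u - v) by lia. subst y z. solve_sol.
  - solve_sol.
  - bool_hyps. f_equal; f_equal; Z.div_mod_to_equations; lia.
  - f_equal; f_equal; Z.div_mod_to_equations; lia.
Qed.

Lemma NrepP_parity_split a b m R : 1 <= a -> 1 <= b ->
  NrepP a b b m (fun x y z => R x && Z.odd (y + z)) =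
  2 * NrepP a b (4*b) m (fun x y z => R x && Z.odd y).
Proof.
  intros ha hb.
  rewrite (NrepP_split _ _ _ _ _ (fun x y z => Z.odd y)).
  rewrite <- Z.add_diag. symmetry. f_equal.
  - apply NrepP_bij with (fun '(x, (y, z)) => (x, (y, 2*z))) (fun '(x, (y, z)) => (x, (y, z/2)));
      try lia; intros [x [y z]] [E H]; unfold_sol.
    + solve_sol.
    + bool_hyps. name_quotient z 2 w. subst z. solve_sol.
    + f_equal; f_equal; Z.div_mod_to_equations; lia.
    + bool_hyps. f_equal; f_equal; Z.div_mod_to_equations; lia.
  - apply NrepP_bij with (fun '(x, (y, z)) => (x, (2*z, y))) (fun '(x, (y, z)) => (x, (z, y/2)));
      try lia; intros [x [y z]] [E H]; unfold_sol.
    + solve_sol.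
    + bool_hyps. name_quotient y 2 w. subst y. solve_sol.
    + f_equal; f_equal; Z.div_mod_to_equations; lia.
    + bool_hyps. f_equal; f_equal; Z.div_mod_to_equations; lia.
Qed.

(** * Congruences modulo 8 *)

Lemma odd_mod4 x : Z.odd x = Z.odd (x mod 4).
Proof. rewrite !Zodd_mod. f_equal. Z.div_mod_to_equations. lia. Qed.

Lemma even_mod4 x : Z.even x = Z.even (x mod 4).
Proof. rewrite !Zeven_mod. f_equal. Z.div_mod_to_equations. lia. Qed.

Lemma odd_add_mod4 x y : Z.odd (x + y) = Z.odd (x mod 4 + y mod 4).
Proof. rewrite !Zodd_mod. f_equal. Z.div_mod_to_equations. lia. Qed.

Lemma odd_half_mod4 x : Z.odd (x / 2) = Z.odd (x mod 4 / 2).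
Proof. rewrite !Zodd_mod. f_equal. Z.div_mod_to_equations. lia. Qed.

Lemma mod4_cases x : x mod 4 = 0 \/ x mod 4 = 1 \/ x mod 4 = 2 \/ x mod 4 = 3.
Proof. pose proof (Z.mod_pos_bound x 4). lia. Qed.

Lemma form_mod8 a b c m x y z : m = a*x*x + b*y*y + c*z*z ->
  m mod 8 = (a*(x mod 4)*(x mod 4) + b*(y mod 4)*(y mod 4) + c*(z mod 4)*(z mod 4)) mod 8.
Proof.
  intros ->.
  pose proof (Z.div_mod x 4 ltac:(lia)) as Hx.
  pose proof (Z.div_mod y 4 ltac:(lia)) as Hy.
  pose proof (Z.div_mod z 4 ltac:(lia)) as Hz.
  set (u := x / 4) in *. set (v := y / 4) in *. set (w := z / 4) in *.
  set (r := x mod 4) in *. set (s := y mod 4) in *. set (t := z mod 4) in *.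
  clearbody u v w r s t. subst x y z.
  rewrite <- (Z.mod_add (a*r*r + b*s*s + c*t*t)
                (a*(2*u*u + u*r) + b*(2*v*v + v*s) + c*(2*w*w + w*t)) 8) by lia.
  f_equal. ring.
Qed.

(* Proves [forall x y z, m = a x^2 + b y^2 + c z^2 -> P x y z = Q x y z] for
   numeral coefficients and predicates that only depend on the residues of
   x, y, z modulo 4: by form_mod8 the equation only constrains these residues,
   so the 64 residue triples are checked one by one against the hypotheses on
   m mod 8 present in the context. *)
Ltac residue_cases :=
  let x := fresh "x" in let y := fresh "y" in let z := fresh "z" in let E := fresh "E" in
  intros x y z E; apply form_mod8 in E;
  rewrite ?(odd_add_mod4 x y), ?(odd_add_mod4 x z), ?(odd_add_mod4 y z),
    ?(odd_half_mod4 x), ?(odd_half_mod4 y), ?(odd_half_mod4 z),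
    ?(odd_mod4 x), ?(odd_mod4 y), ?(odd_mod4 z),
    ?(even_mod4 x), ?(even_mod4 y), ?(even_mod4 z);
  revert E;
  destruct (mod4_cases x) as [-> | [-> | [-> | ->]]];
  destruct (mod4_cases y) as [-> | [-> | [-> | ->]]];
  destruct (mod4_cases z) as [-> | [-> | [-> | ->]]];
  intros E;
  match type of E with _ = ?r => let v := eval vm_compute in r in change r with v in E end;
  first [ reflexivity | exfalso; Z.div_mod_to_equations; lia ].
(** * The six identities *)

Lemma trep_1_3_16 n : 0 <= n -> n mod 4 = 1 ->
  trep 1 3 16 n = 2 * Nrep 1 3 16 (2*n + 5).
Proof.
  intros hn hn4.
  rewrite trep_NrepP, Nrep_NrepP by lia.
  replace (8*n + 1 + 3 + 16) with (4*(2*n + 5)) by ring.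
  assert (HM : (2*n + 5) mod 8 = 7) by (Z.div_mod_to_equations; lia).
  set (M := 2*n + 5) in *. clearbody M.
  transitivity (2 * NrepP 1 3 4 M (fun x y z => Z.odd (x + y) && Z.odd z)).
  { apply (NrepP_eisenstein 1 4); lia. }
  f_equal.
  transitivity (NrepP 1 3 4 M (fun x y z => Z.even x && Z.odd z)).
  { apply NrepP_ext. residue_cases. }
  transitivity (NrepP 1 3 4 M (fun x y z => Z.even x && Z.odd (x / 2))).
  { apply (NrepP_exchange 1 3 M (fun x y z => Z.odd z)); lia. }
  transitivity (NrepP 1 3 4 M (fun x y z => Z.even z && true)).
  { apply NrepP_ext. residue_cases. }
  symmetry. apply (NrepP_double3 1 3 4); lia.
Qed.

Lemma trep_2_2_3 k : 0 <= k -> trep 2 2 3 k = 2 * Nrep 1 3 16 (8*k + 7).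
Proof.
  intros hk.
  rewrite trep_NrepP, Nrep_NrepP by lia.
  replace (8*k + 2 + 2 + 3) with (8*k + 7) by ring.
  assert (HM : (8*k + 7) mod 8 = 7) by (Z.div_mod_to_equations; lia).
  set (M := 8*k + 7) in *. clearbody M.
  transitivity (NrepP 2 2 3 M (fun x y z => Z.odd z && Z.odd y && Z.odd x)).
  { apply NrepP_ext. intros x y z _. unfold odd3. btauto. }
  transitivity (NrepP 3 2 2 M (fun x y z => Z.odd x && Z.odd y && Z.odd z)).
  { apply NrepP_swap13; lia. }
  transitivity (NrepP 3 4 4 M (fun x y z => Z.odd x && Z.odd (y + z))).
  { apply (NrepP_halfsum 3 1); lia. }
  transitivity (2 * NrepP 3 4 16 M (fun x y z => Z.odd x && Z.odd y)).
  { apply (NrepP_parity_split 3 4); lia. }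
  f_equal.
  transitivity (NrepP 3 1 16 M (fun x y z => Z.even y && (Z.odd x && Z.odd (y / 2)))).
  { apply (NrepP_double2 3 1 16); lia. }
  transitivity (NrepP 1 3 16 M (fun x y z => Z.even x && (Z.odd y && Z.odd (x / 2)))).
  { apply NrepP_swap12; lia. }
  apply NrepP_ext. residue_cases.
Qed.

Lemma trep_1_3_48 n : 0 <= n -> n mod 4 = 0 ->
  trep 1 3 48 n = 2 * Nrep 1 3 48 (2*n + 13).
Proof.
  intros hn hn4.
  rewrite trep_NrepP, Nrep_NrepP by lia.
  replace (8*n + 1 + 3 + 48) with (4*(2*n + 13)) by ring.
  assert (HM : (2*n + 13) mod 8 = 5) by (Z.div_mod_to_equations; lia).
  set (M := 2*n + 13) in *. clearbody M.
  transitivity (2 * NrepP 1 3 12 M (fun x y z => Z.odd (x + y) && Z.odd z)).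
  { apply (NrepP_eisenstein 1 12); lia. }
  f_equal.
  transitivity (NrepP 1 3 12 M (fun x y z => Z.even y && Z.odd z)).
  { apply NrepP_ext. residue_cases. }
  transitivity (NrepP 3 1 12 M (fun x y z => Z.even x && Z.odd z)).
  { apply NrepP_swap12; lia. }
  transitivity (NrepP 3 1 12 M (fun x y z => Z.even x && Z.odd (x / 2))).
  { apply (NrepP_exchange 3 1 M (fun x y z => Z.odd z)); lia. }
  transitivity (NrepP 1 3 12 M (fun x y z => Z.even y && Z.odd (y / 2))).
  { apply NrepP_swap12; lia. }
  transitivity (NrepP 1 3 12 M (fun x y z => Z.even z && true)).
  { apply NrepP_ext. residue_cases. }
  symmetry. apply (NrepP_double3 1 3 12); lia.
Qed.

Lemma trep_1_6_6 k : 0 <= k -> trep 1 6 6 k = 2 * Nrep 1 3 48 (8*k + 13).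
Proof.
  intros hk.
  rewrite trep_NrepP, Nrep_NrepP by lia.
  replace (8*k + 1 + 6 + 6) with (8*k + 13) by ring.
  assert (HM : (8*k + 13) mod 8 = 5) by (Z.div_mod_to_equations; lia).
  set (M := 8*k + 13) in *. clearbody M.
  transitivity (NrepP 1 12 12 M (fun x y z => Z.odd x && Z.odd (y + z))).
  { apply (NrepP_halfsum 1 3); lia. }
  transitivity (2 * NrepP 1 12 48 M (fun x y z => Z.odd x && Z.odd y)).
  { apply (NrepP_parity_split 1 12); lia. }
  f_equal.
  transitivity (NrepP 1 3 48 M (fun x y z => Z.even y && (Z.odd x && Z.odd (y / 2)))).
  { apply (NrepP_double2 1 3 48); lia. }
  apply NrepP_ext. residue_cases.
Qed.

Lemma trep_1_3_4c c n L : 1 <= c -> 0 <= n -> 8*n + 1 + 3 + 4*c = 4*(4*L) ->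
  NrepP 1 3 c L (fun x y z => Z.odd (x + y)) = NrepP 1 3 c L (fun _ _ _ => true) ->
  NrepP 1 3 c (4*L) (fun x y z => Z.odd (x + y) && Z.odd z) =
    2 * NrepP 1 3 c L (fun _ _ _ => true) ->
  3 * trep 1 3 (4*c) n = 4 * Nrep 1 3 (4*c) (4*L).
Proof.
  intros hc hn HL Hodd Hpair.
  rewrite trep_NrepP, HL, Nrep_NrepP by lia.
  assert (Htrep : NrepP 1 3 (4*c) (4*(4*L)) odd3 =
                  2 * NrepP 1 3 c (4*L) (fun x y z => Z.odd (x + y) && Z.odd z))
    by (apply (NrepP_eisenstein 1 c); lia).
  assert (HN : NrepP 1 3 (4*c) (4*L) (fun _ _ _ => true) =
               2 * NrepP 1 3 c L (fun x y z => Z.odd (x + y)) + NrepP 1 3 c L (fun _ _ _ => true)).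
  { transitivity (NrepP 1 3 c (4*L) (fun x y z => Z.even z)).
    { rewrite NrepP_double3 by lia. apply NrepP_ext. intros. apply andb_true_r. }
    apply (NrepP_even_third 1 c L); [reflexivity | lia | lia]. }
  rewrite Htrep, Hpair, HN, Hodd. ring.
Qed.

Lemma trep_1_3_4 n : 0 <= n -> n mod 8 = 3 \/ n mod 8 = 5 ->
  3 * trep 1 3 4 n = 4 * Nrep 1 3 4 (2*n + 2).
Proof.
  intros hn hn8.
  assert (HL : 2*n + 2 = 4 * ((n + 1) / 2)) by (Z.div_mod_to_equations; lia).
  assert (HL4 : ((n + 1) / 2) mod 4 = 2 \/ ((n + 1) / 2) mod 4 = 3) by (Z.div_mod_to_equations; lia).
  rewrite HL. set (L := (n + 1) / 2) in *. clearbody L.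
  assert (Hodd : NrepP 1 3 1 L (fun x y z => Z.odd (x + y)) = NrepP 1 3 1 L (fun _ _ _ => true))
    by (apply NrepP_ext; residue_cases).
  apply (trep_1_3_4c 1 n L); [lia | lia | lia | exact Hodd |].
  transitivity (NrepP 1 3 1 (4*L) (fun x y z => Z.odd z && Z.odd y && Z.even x)).
  { apply NrepP_ext. residue_cases. }
  transitivity (NrepP 1 3 1 (4*L) (fun x y z => Z.odd x && Z.odd y && Z.even z)).
  { apply NrepP_swap13; lia. }
  rewrite <- Hodd. apply (NrepP_eisenstein_even 1 1); lia.
Qed.

Lemma trep_1_3_12 n : 0 <= n -> n mod 8 = 0 \/ n mod 8 = 2 ->
  3 * trep 1 3 12 n = 4 * Nrep 1 3 12 (2*n + 4).
Proof.
  intros hn hn8.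
  assert (HL : 2*n + 4 = 4 * ((n + 2) / 2)) by (Z.div_mod_to_equations; lia).
  assert (HL4 : ((n + 2) / 2) mod 4 = 1 \/ ((n + 2) / 2) mod 4 = 2) by (Z.div_mod_to_equations; lia).
  rewrite HL. set (L := (n + 2) / 2) in *. clearbody L.
  assert (Hodd : NrepP 1 3 3 L (fun x y z => Z.odd (x + y)) = NrepP 1 3 3 L (fun _ _ _ => true))
    by (apply NrepP_ext; residue_cases).
  apply (trep_1_3_4c 3 n L); [lia | lia | lia | exact Hodd |].
  transitivity (NrepP 1 3 3 (4*L) (fun x y z => Z.odd x && Z.odd z && Z.even y)).
  { apply NrepP_ext. residue_cases. }
  transitivity (NrepP 1 3 3 (4*L) (fun x y z => Z.odd x && Z.odd y && Z.even z)).
  { apply NrepP_swap23; lia. }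
  rewrite <- Hodd. apply (NrepP_eisenstein_even 1 3); lia.
Qed.

Lemma trep_1_3_36 n : 0 <= n -> n mod 8 = 1 \/ n mod 8 = 7 ->
  3 * trep 1 3 36 n = 4 * Nrep 1 3 36 (2*n + 10).
Proof.
  intros hn hn8.
  assert (HL : 2*n + 10 = 4 * ((n + 5) / 2)) by (Z.div_mod_to_equations; lia).
  assert (HL4 : ((n + 5) / 2) mod 4 = 2 \/ ((n + 5) / 2) mod 4 = 3) by (Z.div_mod_to_equations; lia).
  rewrite HL. set (L := (n + 5) / 2) in *. clearbody L.
  apply (trep_1_3_4c 9 n L); [lia | lia | lia | apply NrepP_ext; residue_cases |].
  transitivity (NrepP 1 3 9 (4*L) (fun x y z => Z.odd y && Z.odd z && Z.even x)).
  { apply NrepP_ext. residue_cases. }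
  transitivity (NrepP 3 9 1 (4*L) (fun x y z => Z.odd x && Z.odd y && Z.even z)).
  { symmetry. apply NrepP_rotate; lia. }
  transitivity (2 * NrepP 3 9 1 L (fun x y z => Z.odd (x + y))).
  { apply (NrepP_eisenstein_even 3 1); lia. }
  f_equal.
  transitivity (NrepP 3 9 1 L (fun _ _ _ => true)).
  { apply NrepP_ext. residue_cases. }
  apply NrepP_rotate; lia.
Qed.

Lemma NrepP_3_4_9_odd L : L mod 4 = 2 \/ L mod 4 = 3 ->
  NrepP 3 4 9 (4*(4*L)) odd3 = 4 * NrepP 1 3 9 L (fun _ _ _ => true).
Proof.
  intros HL4.
  transitivity (NrepP 3 4 9 (4*(4*L)) (fun x y z => Z.odd x && Z.odd z && Z.odd y)).
  { apply NrepP_ext. intros x y z _. unfold odd3. btauto. }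
  transitivity (NrepP 3 9 4 (4*(4*L)) (fun x y z => Z.odd x && Z.odd y && Z.odd z)).
  { apply NrepP_swap23; lia. }
  transitivity (2 * NrepP 3 9 1 (4*L) (fun x y z => Z.odd (x + y) && Z.odd z)).
  { apply (NrepP_eisenstein 3 1); lia. }
  transitivity (2 * NrepP 3 9 1 (4*L) (fun x y z => Z.odd z && Z.odd x && Z.even y)).
  { f_equal. apply NrepP_ext. residue_cases. }
  transitivity (2 * NrepP 1 3 9 (4*L) (fun x y z => Z.odd x && Z.odd y && Z.even z)).
  { f_equal. apply NrepP_rotate; lia. }
  transitivity (2 * (2 * NrepP 1 3 9 L (fun x y z => Z.odd (x + y)))).
  { f_equal. apply (NrepP_eisenstein_even 1 9); lia. }
  rewrite Z.mul_assoc. f_equal. apply NrepP_ext. residue_cases.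
Qed.

Lemma NrepP_3_4_9_all L : L mod 4 = 2 \/ L mod 4 = 3 ->
  NrepP 3 4 9 (4*L) (fun _ _ _ => true) = 3 * NrepP 1 3 9 L (fun _ _ _ => true).
Proof.
  intros HL4.
  transitivity (NrepP 3 9 1 (4*L) (fun x y z => Z.even z)).
  { rewrite NrepP_swap23, (NrepP_double3 3 9 1) by lia.
    apply NrepP_ext. intros. apply andb_true_r. }
  transitivity (2 * NrepP 3 9 1 L (fun x y z => Z.odd (x + y)) + NrepP 3 9 1 L (fun _ _ _ => true)).
  { apply (NrepP_even_third 3 1 L); [reflexivity | lia | lia]. }
  rewrite (NrepP_ext 3 9 1 L (fun x y z => Z.odd (x + y)) (fun _ _ _ => true)) by residue_cases.
  rewrite (NrepP_rotate 3 9 1) by lia. ring.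
Qed.

Lemma trep_3_4_9 n : 0 <= n -> n mod 8 = 2 \/ n mod 8 = 4 ->
  3 * trep 3 4 9 n = 4 * Nrep 3 4 9 (2*n + 4).
Proof.
  intros hn hn8.
  assert (HL : 2*n + 4 = 4 * ((n + 2) / 2)) by (Z.div_mod_to_equations; lia).
  assert (HL4 : ((n + 2) / 2) mod 4 = 2 \/ ((n + 2) / 2) mod 4 = 3) by (Z.div_mod_to_equations; lia).
  rewrite trep_NrepP, Nrep_NrepP by lia.
  replace (8*n + 3 + 4 + 9) with (4*(2*n + 4)) by ring.
  rewrite HL, (NrepP_3_4_9_odd _ HL4), (NrepP_3_4_9_all _ HL4). ring.
Qed.

Theorem theorem4p1 (n : Z) (hn : 0 < n) :
  (n mod 4 = 1 ->
     trep 1 3 16 n = 2 * Nrep 1 3 16 (2*n+5) /\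
     2 * Nrep 1 3 16 (2*n+5) = trep 2 2 3 ((n-1)/4)) /\
  (n mod 4 = 0 ->
     trep 1 3 48 n = 2 * Nrep 1 3 48 (2*n+13) /\
     2 * Nrep 1 3 48 (2*n+13) = trep 1 6 6 (n/4)) /\
  ((n mod 8 = 3 \/ n mod 8 = 5) ->
     3 * trep 1 3 4 n = 4 * Nrep 1 3 4 (2*n+2)) /\
  ((n mod 8 = 0 \/ n mod 8 = 2) ->
     3 * trep 1 3 12 n = 4 * Nrep 1 3 12 (2*n+4)) /\
  ((n mod 8 = 1 \/ n mod 8 = 7) ->
     3 * trep 1 3 36 n = 4 * Nrep 1 3 36 (2*n+10)) /\
  ((n mod 8 = 2 \/ n mod 8 = 4) ->
     3 * trep 3 4 9 n = 4 * Nrep 3 4 9 (2*n+4)).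
Proof.
  split; [|split; [|split; [|split; [|split]]]]; intros hres.
  - split; [apply trep_1_3_16; lia|].
    replace (2*n + 5) with (8 * ((n - 1) / 4) + 7) by (Z.div_mod_to_equations; lia).
    symmetry. apply trep_2_2_3. Z.div_mod_to_equations; lia.
  - split; [apply trep_1_3_48; lia|].
    replace (2*n + 13) with (8 * (n / 4) + 13) by (Z.div_mod_to_equations; lia).
    symmetry. apply trep_1_6_6. Z.div_mod_to_equations; lia.
  - apply trep_1_3_4; lia.
  - apply trep_1_3_12; lia.
  - apply trep_1_3_36; lia.
  - apply trep_3_4_9; lia.
Qed.
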